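(* Let $h\geq 3$ and $v\equiv 0\pmod{2h}$. If there exists a $(K_2,S(C_h))$-URD$(v;r,s)$, then $(r,s)\in J(v)$, where $J(v)=\{(3+4x,\ \frac{v-4}{2}-2x) : x=0,1,\ldots,\frac{v-4}{4}\}$ if $v\equiv 0\pmod{4h}$, or if $v\equiv 2h\pmod{4h}$ and $h$ is even; and $J(v)=\{(1+4x,\ \frac{v-2}{2}-2x) : x=0,1,\ldots,\frac{v-2}{4}\}$ if $v\equiv 2h\pmod{4h}$ and $h$ is odd.
   Context: For $h\geq 3$, an $h$-sun is the graph on $2h$ distinct vertices $a_1,\ldots,a_h,b_1,\ldots,b_h$ consisting of the $h$-cycle $(a_1,a_2,\ldots,a_h)$ together with the edges $\{a_i,b_i\}$, $i=1,\ldots,h$. A $(K_2,S(C_h))$-URD$(v;r,s)$ is a partition of the edge set of the complete graph $K_v$ into $r$ classes each of which is a 1-factor (perfect matching) of $K_v$, and $s$ classes each of which is a set of vertex-disjoint $h$-suns covering every vertex of $K_v$ exactly once. *)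

From mathcomp Require Import all_boot.
Set Implicit Arguments. Unset Strict Implicit. Unset Printing Implicit Defensive.

Definition Kedges (v : nat) : {set {set 'I_v}} := [set e : {set 'I_v} | #|e| == 2].

Definition one_factor (v : nat) (M : {set {set 'I_v}}) : Prop :=
  M \subset Kedges v /\ forall x : 'I_v, #|[set e in M | x \in e]| = 1.

Definition sun_edges (v h : nat) (a b : 'I_h -> 'I_v) : {set {set 'I_v}} :=
  [set [set a i; a (ordS i)] | i : 'I_h] :|: [set [set a i; b i] | i : 'I_h].

(* Sun j has a-vertices  sv j i true  and b-vertices  sv j i false.
   Bijectivity of the uncurried map = the 2h vertices of each sun are distinct,
   distinct suns are vertex-disjoint, and every vertex is covered. *)
Definition sun_factor (v h : nat) (S : {set {set 'I_v}}) : Prop :=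
  exists (k : nat) (sv : 'I_k -> 'I_h -> bool -> 'I_v),
    bijective (fun p : 'I_k * 'I_h * bool => sv p.1.1 p.1.2 p.2) /\
    S = \bigcup_(j < k) sun_edges (fun i => sv j i true) (fun i => sv j i false).

Definition URD (h v r s : nat) : Prop :=
  exists (F : 'I_r -> {set {set 'I_v}}) (S : 'I_s -> {set {set 'I_v}}),
    (forall i, one_factor (F i)) /\ (forall j, sun_factor h (S j)) /\
    forall e : {set 'I_v}, e \in Kedges v ->
      #|[set i | e \in F i]| + #|[set j | e \in S j]| = 1.

From mathcomp Require Import all_boot zify.
Set Implicit Arguments. Unset Strict Implicit. Unset Printing Implicit Defensive.

(* Every vertex has degree 1 in a 1-factor, and degree 3 (cycle vertex) or 1
   (pendant vertex) in a sun factor, where exactly half of the vertices lie on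
   cycles.  Summing degrees over all vertices gives r + 2s = v - 1; at a single
   vertex, v - 1 = r + (a sum of s odd numbers), so s is even.  Hence
   r = v - 1 (mod 4), which is 3 or 1 according as 4 | v or v = 2 (mod 4). *)

Definition deg v (X : {set {set 'I_v}}) (x : 'I_v) : nat := #|[set e in X | x \in e]|.

Lemma card_set_sum (T : finType) (P : pred T) : #|[set i | P i]| = \sum_i P i.
Proof. by rewrite -sum1dep_card big_mkcond; apply: eq_bigr => i _; case: (P i). Qed.

Lemma deg_Kedges v (x : 'I_v) : deg (Kedges v) x = v.-1.
Proof.
rewrite /deg; have -> : [set e in Kedges v | x \in e] = (fun y => [set x; y]) @: [set~ x].
  apply/setP => e; rewrite !inE; apply/idP/imsetP.
    case/andP => /cards2P [a [b [ab ->]]]; rewrite !inE => /orP [] /eqP xE; subst x.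
      by exists b; rewrite // !inE eq_sym.
    by exists a; [rewrite !inE | rewrite setUC].
  by move=> [y]; rewrite !inE => yx ->; rewrite cards2 (eq_sym x y) yx !inE eqxx.
rewrite card_in_imset ?cardsC1 ?card_ord // => y z; rewrite !inE => _ zx E.
have : z \in [set x; y] by rewrite E !inE eqxx orbT.
by rewrite !inE (negbTE zx) => /eqP.
Qed.

Lemma deg_sum_Kedges v (X : {set {set 'I_v}}) (x : 'I_v) : X \subset Kedges v ->
  deg X x = \sum_(e in Kedges v | x \in e) (e \in X).
Proof.
move=> /subsetP XK; rewrite /deg card_set_sum [RHS]big_mkcond; apply: eq_bigr => e _.
have [/XK -> | _] := boolP (e \in X); first by case: (x \in e).
by rewrite if_same.
Qed.

Lemma deg_partition v r s (F : 'I_r -> {set {set 'I_v}}) (S : 'I_s -> {set {set 'I_v}})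
    (x : 'I_v) :
  (forall i, F i \subset Kedges v) -> (forall j, S j \subset Kedges v) ->
  (forall e, e \in Kedges v -> #|[set i | e \in F i]| + #|[set j | e \in S j]| = 1) ->
  \sum_i deg (F i) x + \sum_j deg (S j) x = v.-1.
Proof.
move=> FK SK cover.
under eq_bigr do rewrite deg_sum_Kedges //.
under [in X in _ + X]eq_bigr do rewrite deg_sum_Kedges //.
rewrite exchange_big [in X in _ + X]exchange_big -big_split /=.
rewrite -(deg_Kedges x) /deg -sum1dep_card.
by apply: eq_bigr => e /andP [eK _]; rewrite -(cover e eK) !card_set_sum.
Qed.

Lemma val_ordS n (i : 'I_n) : val (ordS i) = if i.+1 == n then 0 else i.+1.
Proof.
rewrite /=; have := ltn_ord i; case: eqP => [-> _ | ne lt_in]; first by rewrite modnn.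
by rewrite modn_small //; lia.
Qed.

Lemma ordS_neq n (i : 'I_n) : 2 <= n -> ordS i != i.
Proof.
move=> n2; apply/eqP => /(congr1 val); rewrite val_ordS.
by have := ltn_ord i; case: eqP => /=; lia.
Qed.

Lemma ordS_pred_neq n (i : 'I_n) : 3 <= n -> ordS i != ord_pred i.
Proof.
move=> n3; apply/eqP => /(congr1 (@ordS n)); rewrite ord_predK => /(congr1 val) /esym.
by rewrite !val_ordS; have := ltn_ord i; do 2 case: eqP => /=; lia.
Qed.

Section SunFactor.

Variables (v h k : nat) (sv : 'I_k -> 'I_h -> bool -> 'I_v).
Hypothesis h3 : 3 <= h.
Hypothesis sv_inj : injective (fun p : 'I_k * 'I_h * bool => sv p.1.1 p.1.2 p.2).

Let suns := \bigcup_(j < k) sun_edges (fun i => sv j i true) (fun i => sv j i false).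

Lemma sv_eq j i b j' i' b' : (sv j i b == sv j' i' b') = ((j, i, b) == (j', i', b')).
Proof. by apply/eqP/eqP => [/(sv_inj (x1 := (j, i, b)) (x2 := (j', i', b'))) | [-> -> ->]]. Qed.

Lemma suns_sub_Kedges : suns \subset Kedges v.
Proof.
apply/subsetP => e /bigcupP [j _] /setUP [] /imsetP [i _ ->];
  rewrite inE cards2 sv_eq ?xpair_eqE ?eqxx ?andbT ?andbF //.
by rewrite (eq_sym i) (negbTE (ordS_neq i (ltnW h3))).
Qed.

Lemma incident_suns j i c e :
  (e \in suns) && (sv j i c \in e) =
  (e == [set sv j i true; sv j i false])
  || c && ((e == [set sv j i true; sv j (ordS i) true])
           || (e == [set sv j (ord_pred i) true; sv j i true])).
Proof.
have sunP e' : e' \in sun_edges (fun i => sv j i true) (fun i => sv j i false) -> e' \in suns.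
  by move=> He; apply/bigcupP; exists j.
apply/idP/idP.
  move=> /andP [/bigcupP [j' _] /setUP [] /imsetP [i' _ ->]];
    rewrite !inE !sv_eq !xpair_eqE => /orP [] /andP [/andP [/eqP -> /eqP ->] /eqP ->];
    by rewrite ?ordSK eqxx ?orbT.
case/orP => [/eqP -> | /andP [-> /orP [] /eqP ->]]; apply/andP; split.
- by apply: sunP; apply/setUP; right; apply/imsetP; exists i.
- by rewrite !inE; case: c; rewrite eqxx ?orbT.
- by apply: sunP; apply/setUP; left; apply/imsetP; exists i.
- by rewrite !inE eqxx.
- by apply: sunP; apply/setUP; left; apply/imsetP; exists (ord_pred i); rewrite ?ord_predK.
- by rewrite !inE eqxx orbT.
Qed.

Lemma deg_suns j i c : deg suns (sv j i c) = if c then 3 else 1.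
Proof.
set C := [set sv j i true; sv j i false].
set A := [set sv j i true; sv j (ordS i) true].
set B := [set sv j (ord_pred i) true; sv j i true].
rewrite /deg.
have -> : [set e in suns | sv j i c \in e] = if c then C |: (A |: [set B]) else [set C].
  by apply/setP => e; rewrite inE incident_suns; case: c; rewrite !inE ?orbF.
case: c; last exact: cards1.
have C_AB : C \notin A |: [set B].
  have : sv j i false \in C by rewrite !inE eqxx orbT.
  apply: contraL; rewrite in_setU1 in_set1 => /orP [] /eqP ->;
    by rewrite !inE !sv_eq !xpair_eqE !andbF.
have A_B : A \notin [set B].
  have : sv j (ordS i) true \in A by rewrite !inE eqxx orbT.
  apply: contraL; rewrite in_set1 => /eqP ->; rewrite !inE !sv_eq !xpair_eqE !eqxx /= andbT.
  by rewrite andbT negb_or ordS_pred_neq // ordS_neq // ltnW.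
by rewrite !cardsU1 C_AB A_B cards1.
Qed.

End SunFactor.

Lemma sun_factor_deg h v (S : {set {set 'I_v}}) : 3 <= h -> sun_factor h S ->
  [/\ S \subset Kedges v, forall x, odd (deg S x) & \sum_x deg S x = v.*2].
Proof.
move=> h3 [k [sv [sv_bij ->]]]; have sv_inj := bij_inj sv_bij.
split; first exact: suns_sub_Kedges.
  move=> x; have [g _ gK] := sv_bij; rewrite -[x]gK deg_suns //.
  by case: ifP.
rewrite (reindex _ (onW_bij _ sv_bij)) /=.
under eq_bigr do rewrite deg_suns //.
rewrite -(pair_big xpredT xpredT (fun ji (b : bool) => if b then 3 else 1)) /=.
under eq_bigr do rewrite big_bool.
rewrite sum_nat_const card_prod !card_ord.
have := bij_eq_card sv_bij; rewrite !card_prod !card_ord card_bool => <-.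
by rewrite -muln2 -!mulnA.
Qed.

Lemma odd_sum_odd (I : finType) (F : I -> nat) :
  (forall i, odd (F i)) -> odd (\sum_i F i) = odd #|I|.
Proof.
move=> Fodd; rewrite -sum1_card; elim/big_rec2: _ => // i m n _ IH.
by rewrite !oddD IH Fodd.
Qed.

Lemma URD_degree_count h v r s : 3 <= h -> 0 < v -> URD h v r s -> v.-1 = r + s.*2 /\ ~~ odd s.
Proof.
move=> h3 v0 [F [S [F1 [Ssun cover]]]].
have SK j : S j \subset Kedges v by case: (sun_factor_deg h3 (Ssun j)).
have Sodd j x : odd (deg (S j) x) by case: (sun_factor_deg h3 (Ssun j)).
have Ssum j : \sum_x deg (S j) x = v.*2 by case: (sun_factor_deg h3 (Ssun j)).
have deg_x x : r + \sum_j deg (S j) x = v.-1.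
  rewrite -(deg_partition x (fun i => (F1 i).1) SK cover).
  by congr (_ + _); rewrite (eq_bigr (fun=> 1)) ?sum1_card ?card_ord // => i _; apply: (F1 i).2.
have r_2s : v.-1 = r + s.*2.
  have : \sum_(x < v) (r + \sum_j deg (S j) x) = \sum_(x < v) v.-1.
    by apply: eq_bigr => x _; exact: deg_x.
  rewrite big_split exchange_big /= (eq_bigr _ (fun j _ => Ssum j)) !sum_nat_const !card_ord.
  by move=> E; apply/eqP; rewrite -(eqn_pmul2l v0) -E; apply/eqP; nia.
split=> //; have := congr1 odd (deg_x (Ordinal v0)).
rewrite oddD odd_sum_odd // card_ord r_2s oddD odd_double addbF.
by move=> /(congr1 (addb (odd r))); rewrite addKb addbb => ->.
Qed.

Lemma rs_solution_mod4_0 (v r s : nat) : 4 %| v -> 0 < v -> ~~ odd s -> v.-1 = r + s.*2 ->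
  exists2 x : nat, x <= (v - 4) %/ 4 & r = 3 + 4 * x /\ s = (v - 4) %/ 2 - 2 * x.
Proof.
move=> /dvdnP [m ->] v0 /negbTE s_even; rewrite -subn1 -(odd_double_half s) s_even add0n.
by move=> E; exists (m - 1 - s./2); lia.
Qed.

Lemma rs_solution_mod4_2 (v r s : nat) : v %% 4 = 2 -> ~~ odd s -> v.-1 = r + s.*2 ->
  exists2 x : nat, x <= (v - 2) %/ 4 & r = 1 + 4 * x /\ s = (v - 2) %/ 2 - 2 * x.
Proof.
move=> v2 /negbTE s_even; rewrite (divn_eq v 4) v2 -subn1 -(odd_double_half s) s_even add0n.
by move=> E; exists (v %/ 4 - s./2); lia.
Qed.

Lemma dvd4_of_mod4h (v h : nat) :
  v %% (4 * h) = 0 \/ (v %% (4 * h) = 2 * h /\ ~~ odd h) -> 4 %| v.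
Proof.
case=> [E | [E /negbTE h_even]]; rewrite (divn_eq v (4 * h)) E; move: (v %/ _) => q.
  by rewrite addn0 mulnCA dvdn_mulr.
rewrite -(odd_double_half h) h_even add0n; apply/dvdnP; exists (q * h./2.*2 + h./2); nia.
Qed.

Lemma mod4_of_mod4h (v h : nat) : v %% (4 * h) = 2 * h /\ odd h -> v %% 4 = 2.
Proof.
case=> E h_odd; rewrite (divn_eq v (4 * h)) E; move: (v %/ _) => q.
rewrite -(odd_double_half h) h_odd; nia.
Qed.

Theorem lemma2p2 (h v r s : nat) :
  3 <= h -> 0 < v -> v %% (2 * h) = 0 -> URD h v r s ->
  (((v %% (4 * h) = 0) \/ (v %% (4 * h) = 2 * h /\ ~~ odd h)) ->
     exists2 x : nat, x <= (v - 4) %/ 4 & r = 3 + 4 * x /\ s = (v - 4) %/ 2 - 2 * x) /\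
  ((v %% (4 * h) = 2 * h /\ odd h) ->
     exists2 x : nat, x <= (v - 2) %/ 4 & r = 1 + 4 * x /\ s = (v - 2) %/ 2 - 2 * x).
Proof.
move=> h3 v0 _ urd; have [r_2s s_even] := URD_degree_count h3 v0 urd.
split=> [v_0mod4 | v_2mod4].
  exact: rs_solution_mod4_0 (dvd4_of_mod4h v_0mod4) v0 s_even r_2s.
exact: rs_solution_mod4_2 (mod4_of_mod4h v_2mod4) s_even r_2s.
Qed.
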